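(* There exists a dynamic network congestion game with a Nash equilibrium $\pi$ such that for every blind Nash equilibrium $\pi'$ of that game, the social cost of $\pi$ is strictly smaller than the social cost of $\pi'$.
   Context: Let $\mathcal F$ be the set of non-decreasing piecewise-affine functions $\mathbb N\to\mathbb N$ with finitely many pieces. An arena is $\mathcal A=(V,E,\mathsf{src},\mathsf{tgt})$ with $V$ finite, $E$ a partial function $V\times V\to\mathcal F$ (edge $e$ has cost function $\ell_e$); $\mathsf{tgt}$ has only a self-loop of constant cost $0$ and is reachable from every state. A dynamic NCG $(\mathcal A,n)$ has players $[n]$, all starting in $\mathsf{src}$; in each step each player simultaneously picks an edge $e_i$ leaving their current state, moves along it and pays $\ell_{e_i}(u_i)$ with $u_i$ the number of players choosing $e_i$ in that step. Strategies map finite histories to edges leaving the player's current state; $\mathrm{cost}_i(\sigma)$ is player $i$'s total payment along the outcome of profile $\sigma$ until reaching $\mathsf{tgt}$, and the social cost is $\sum_i\mathrm{cost}_i(\sigma)$. A Nash equilibrium is a profile in which no player can lower their cost by unilaterally changing strategy. A strategy is blind if it depends only on the states visited by the player itself (follows a fixed path of $\mathcal A$); a blind Nash equilibrium is a blind profile where no player can lower their cost by switching to another blind strategy. *)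

From HB Require Import structures.
From mathcomp Require Import all_boot all_order all_algebra.
From Stdlib Require Import ClassicalEpsilon.
Set Implicit Arguments. Unset Strict Implicit. Unset Printing Implicit Defensive.
Import GRing.Theory Num.Theory.

Definition nondecreasing_fun (f : nat -> nat) : Prop :=
  forall x y, x <= y -> f x <= f y.

Definition affine_on (f : nat -> nat) (P : pred nat) : Prop :=
  exists a b : int, forall x, P x -> Posz (f x) = (a * Posz x + b)%R.

(* finitely many pieces: the breakpoints s cut N into the intervals
   { x | count (<= x) s = j }, j = 0 .. size s; f is affine on each of them *)
Definition piecewise_affine (f : nat -> nat) : Prop :=
  exists s : seq nat, forall j : nat,
    affine_on f (fun x => count (fun t => t <= x) s == j).

Definition cost_fun (f : nat -> nat) : Prop :=
  nondecreasing_fun f /\ piecewise_affine f.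

Record arena := Arena {
  state : finType;
  edge : state -> state -> option (nat -> nat);
  src : state;
  tgt : state }.
Arguments edge : clear implicits.

Definition is_edge (A : arena) (u v : state A) : bool := isSome (edge A u v).
Arguments is_edge : clear implicits.

Definition wf_arena (A : arena) : Prop :=
  [/\ forall u v l, edge A u v = Some l -> cost_fun l,
      forall v, is_edge A (tgt A) v -> v = tgt A,
      exists l, edge A (tgt A) (tgt A) = Some l /\ forall u, l u = 0
    &
      forall v, connect (is_edge A) v (tgt A)].

(* ---------- extended naturals (None = +infinity) ---------- *)
Definition enat := option nat.
Definition ele (a b : enat) : bool :=
  match a, b with
  | _, None => true
  | None, Some _ => false
  | Some x, Some y => x <= y
  end.
Definition elt (a b : enat) : bool := ~~ ele b a.
Definition eadd (a b : enat) : enat :=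
  match a, b with Some x, Some y => Some (x + y) | _, _ => None end.

Definition esup (a : nat -> nat) : enat :=
  match excluded_middle_informative
          (exists v, (forall N, a N <= v) /\ exists N, a N = v) with
  | left H => Some (proj1_sig (constructive_indefinite_description _ H))
  | right _ => None
  end.

Section Game.
Variables (A : arena) (n : nat).

Definition config := {ffun 'I_n -> state A}.
Definition init_config : config := [ffun _ => src A].

(* a history is the sequence of configurations reached after the initial one *)
Definition history := seq config.
Definition cur (h : history) : config := last init_config h.

(* a strategy maps a history to the next state (the edge taken is (cur i, next)) *)
Definition strategy := history -> state A.
Definition profile := 'I_n -> strategy.

Definition valid_strategy (i : 'I_n) (s : strategy) : Prop :=
  forall h : history, is_edge A (cur h i) (s h).
Definition valid_profile (sigma : profile) : Prop :=
  forall i, valid_strategy i (sigma i).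

Definition next (sigma : profile) (h : history) : config := [ffun i => sigma i h].

Fixpoint hist (sigma : profile) (k : nat) : history :=
  match k with
  | 0 => [::]
  | k'.+1 => rcons (hist sigma k') (next sigma (hist sigma k'))
  end.

Definition load (sigma : profile) (k : nat) (i : 'I_n) : nat :=
  let h := hist sigma k in
  #|[set j : 'I_n | (cur h j == cur h i) && (next sigma h j == next sigma h i)]|.

Definition pay (sigma : profile) (k : nat) (i : 'I_n) : nat :=
  let h := hist sigma k in
  match edge A (cur h i) (next sigma h i) with
  | Some l => l (load sigma k i)
  | None => 0
  end.

(* total payment (tgt has only a 0-cost self-loop, so summing over all steps
   is the payment until reaching tgt); +infinity if unbounded *)
Definition cost (sigma : profile) (i : 'I_n) : enat :=
  esup (fun N => \sum_(k < N) pay sigma k i).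

Definition social_cost (sigma : profile) : enat :=
  \big[eadd/Some 0]_(i < n) cost sigma i.

Definition upd (sigma : profile) (i : 'I_n) (s : strategy) : profile :=
  fun j => if j == i then s else sigma j.

Definition nash (sigma : profile) : Prop :=
  valid_profile sigma /\
  forall i s, valid_strategy i s -> ele (cost sigma i) (cost (upd sigma i s) i).

Definition blind_strat (i : 'I_n) (b : seq (state A) -> state A) : strategy :=
  fun h : history => b [seq (c : config) i | c <- h].

Definition blind_profile (sigma : profile) : Prop :=
  forall i, exists b, forall h, sigma i h = blind_strat i b h.

Definition blind_nash (sigma : profile) : Prop :=
  [/\ valid_profile sigma, blind_profile sigma &
      forall i b, valid_strategy i (blind_strat i b) ->
        ele (cost sigma i) (cost (upd sigma i (blind_strat i b)) i)].

End Game.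

(* Besides a safe route s -> a -> t of cost 3, the routes
   s -> b -> b' -> m -> t, s -> c -> c' -> m -> t and s -> c -> b' -> m -> t are
   (almost) free for a lone player, but the edges s -> c, b' -> m and m -> t
   charge a surcharge per extra user. In the equilibrium player 1 takes the safe
   route and player 0 goes to c, where it watches player 1: should player 1
   deviate to b, player 0 moves to b' and the shared edges b' -> m -> t cost
   player 1 again 3; should it deviate to c, the shared edge s -> c costs it 3.
   So the social cost is 3. A blind player 0 cannot condition on player 1's
   position, and checking the 16 pairs of routes shows that every pair stable
   under the blind deviations to b and c costs more than 3 in total. *)

From HB Require Import structures.
From mathcomp Require Import all_boot all_algebra zify.
From Stdlib Require Import ClassicalEpsilon.
Set Implicit Arguments. Unset Strict Implicit. Unset Printing Implicit Defensive.

Lemma esup_max (a : nat -> nat) N : (forall M, a M <= a N) -> esup a = Some (a N).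
Proof.
move=> le_aN; rewrite /esup; case: excluded_middle_informative => [H|H]; last first.
  by case: H; exists (a N); split => //; exists N.
congr Some; case: (constructive_indefinite_description _ H) => v [le_av [M aM]] /=.
by apply/eqP; rewrite eqn_leq le_av -aM le_aN.
Qed.

Section Trajectories.
Variables (A : arena) (n : nat).
Implicit Types (sg : profile A n) (i j : 'I_n) (h : history A n).

Definition pos sg k i : state A := cur (hist sg k) i.

Lemma cur_hist_succ sg k : cur (hist sg k.+1) = next sg (hist sg k).
Proof. by rewrite /cur /= last_rcons. Qed.

Lemma pos0 sg i : pos sg 0 i = src A.
Proof. by rewrite /pos /cur /= ffunE. Qed.

Lemma pos_succ sg k i : pos sg k.+1 i = sg i (hist sg k).
Proof. by rewrite /pos cur_hist_succ ffunE. Qed.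

Lemma valid_pos_edge sg k i : valid_profile sg -> is_edge A (pos sg k i) (pos sg k.+1 i).
Proof. by move=> valid_sg; rewrite pos_succ; apply: valid_sg. Qed.

Definition edge_cost (u v : state A) (x : nat) : nat :=
  if edge A u v is Some l then l x else 0.

Definition same_step sg k i j : bool :=
  (pos sg k j == pos sg k i) && (pos sg k.+1 j == pos sg k.+1 i).

Lemma pay_pos sg k i :
  pay sg k i = edge_cost (pos sg k i) (pos sg k.+1 i) #|[set j | same_step sg k i j]|.
Proof. by rewrite /pay /load /same_step /pos cur_hist_succ. Qed.

Lemma pay_at_tgt sg k i : wf_arena A ->
  pos sg k i = tgt A -> pos sg k.+1 i = tgt A -> pay sg k i = 0.
Proof.
by case=> _ _ [l [tgt_l l0]] _ posk posk1; rewrite pay_pos posk posk1 /edge_cost tgt_l.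
Qed.

Lemma cost_reach_tgt sg i N : wf_arena A ->
  (forall k, N <= k -> pos sg k i = tgt A) ->
  cost sg i = Some (\sum_(k < N) pay sg k i).
Proof.
move=> wfA at_tgt; apply: esup_max => M /=.
rewrite -!(big_mkord xpredT (fun k => pay sg k i)).
case: (leqP M N) => [le_MN | /ltnW le_NM].
  by rewrite (big_cat_nat (leq0n M) le_MN) leq_addr.
rewrite (big_cat_nat (leq0n N) le_NM) /= [X in _ + X]big1_seq ?addn0 //.
move=> k /andP[_]; rewrite mem_index_iota => /andP[le_Nk _].
by rewrite pay_at_tgt ?at_tgt ?(leqW le_Nk).
Qed.

Lemma valid_upd sg i s :
  valid_profile sg -> valid_strategy i s -> valid_profile (upd sg i s).
Proof. by move=> valid_sg valid_s j; rewrite /upd; case: (j =P i) => [->|_]. Qed.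

Definition own_view h i : seq (state A) := [seq (c : config A n) i | c <- h].

Lemma last_own_view h i : last (src A) (own_view h i) = cur h i.
Proof. by rewrite /cur -(last_map (fun c : config A n => c i)) ffunE. Qed.

Lemma pos_blind sg sg' j b :
  (forall h, sg j h = blind_strat j b h) -> (forall h, sg' j h = blind_strat j b h) ->
  forall k, pos sg k j = pos sg' k j.
Proof.
move=> sg_b sg'_b.
have views k : own_view (hist sg k) j = own_view (hist sg' k) j.
  elim: k => //= k IH; rewrite /own_view !map_rcons /next !ffunE sg_b sg'_b.
  by rewrite /blind_strat -!/(own_view _ j) IH.
by move=> k; rewrite /pos -!last_own_view views.
Qed.

Definition memoryless (f : state A -> state A) i : strategy A n :=
  blind_strat i (fun s => f (last (src A) s)).

Lemma memorylessE f i h : memoryless f i h = f (cur h i).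
Proof. by rewrite /memoryless /blind_strat -/(own_view h i) last_own_view. Qed.

Lemma memoryless_valid f i :
  (forall u, is_edge A u (f u)) -> valid_strategy i (memoryless f i).
Proof. by move=> f_edge h; rewrite memorylessE. Qed.

Lemma pos_memoryless sg i f :
  (forall h, sg i h = f (cur h i)) -> forall k, pos sg k i = iter k f (src A).
Proof. by move=> sg_f; elim=> [|k IH]; rewrite ?pos0 // pos_succ sg_f -/(pos sg k i) IH. Qed.

Lemma rank_pos_le sg i (r : state A -> nat) :
  valid_profile sg -> (forall u v, is_edge A u v -> r v <= (r u).-1) ->
  forall k, r (pos sg k i) <= r (src A) - k.
Proof.
move=> valid_sg r_edge; elim=> [|k IH]; first by rewrite pos0 subn0.
have := r_edge _ _ (valid_pos_edge k i valid_sg); lia.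
Qed.

End Trajectories.

Section TwoPlayers.
Variable A : arena.
Implicit Types (sg : profile A 2) (i j : 'I_2).

Lemma ord2P i : i = ord0 \/ i = ord_max.
Proof. by case: i => -[|[|//]] ?; [left | right]; apply: val_inj. Qed.

Lemma card_ord2 (P : pred 'I_2) i j : i != j -> #|[set x | P x]| = P i + P j.
Proof.
rewrite -sum1_card big_mkcond /= !big_ord_recl big_ord0 addn0 !inE.
have -> : lift ord0 (ord0 : 'I_1) = ord_max by apply: val_inj.
by case: (ord2P i) (ord2P j) => -> [] -> //; rewrite addnC.
Qed.

Lemma social_cost_two sg : social_cost sg = eadd (cost sg ord0) (cost sg ord_max).
Proof.
rewrite /social_cost !big_ord_recl big_ord0.
have -> : lift ord0 (ord0 : 'I_1) = ord_max by apply: val_inj.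
by case: (cost sg ord0) => [?|]; case: (cost sg ord_max) => [?|] //=; rewrite addn0.
Qed.

Definition pair_cost (p q : nat -> state A) N : nat :=
  \sum_(k < N) edge_cost (p k) (p k.+1) (1 + ((q k == p k) && (q k.+1 == p k.+1))).

Lemma cost_pair sg i j p q N : wf_arena A -> i != j ->
  (forall k, pos sg k i = p k) -> (forall k, pos sg k j = q k) ->
  (forall k, N <= k -> p k = tgt A) ->
  cost sg i = Some (pair_cost p q N).
Proof.
move=> wfA ne_ij sg_p sg_q p_tgt.
rewrite (cost_reach_tgt (N := N) wfA) => [|k le_Nk]; last by rewrite sg_p p_tgt.
congr Some; apply: eq_bigr => k _.
by rewrite pay_pos (card_ord2 _ ne_ij) /same_step !sg_p !sg_q !eqxx.
Qed.

End TwoPlayers.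

Inductive vertex := Vs | Va | Vb | Vb' | Vc | Vc' | Vm | Vt.

Definition ord_of_vertex (u : vertex) : 'I_8 :=
  match u with
  | Vs => @Ordinal 8 0 isT | Va => @Ordinal 8 1 isT | Vb => @Ordinal 8 2 isT
  | Vb' => @Ordinal 8 3 isT | Vc => @Ordinal 8 4 isT | Vc' => @Ordinal 8 5 isT
  | Vm => @Ordinal 8 6 isT | Vt => @Ordinal 8 7 isT
  end.

Definition vertex_of_ord (o : 'I_8) : vertex := nth Vt [:: Vs; Va; Vb; Vb'; Vc; Vc'; Vm] o.

Lemma ord_of_vertexK : cancel ord_of_vertex vertex_of_ord.
Proof. by case. Qed.

HB.instance Definition _ := Finite.copy vertex (can_type ord_of_vertexK).

Definition cst (c : nat) : nat -> nat := fun _ => c.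
Definition surcharge (a : nat) : nat -> nat := fun u => a * (u - 1).

Lemma cst_cost_fun c : cost_fun (cst c).
Proof.
split=> //; exists [::] => j; exists 0%R, (Posz c) => x _.
by rewrite GRing.mul0r GRing.add0r.
Qed.

Lemma surcharge_cost_fun a : cost_fun (surcharge a).
Proof.
split; first by move=> x y le_xy; rewrite /surcharge leq_mul2l leq_sub2r ?orbT.
exists [:: 1] => -[|[|j]].
- by exists 0%R, 0%R => -[|x] //=; rewrite /surcharge muln0.
- exists (Posz a), (- Posz a)%R => x /=; rewrite addn0 => /eqP x_ge1.
  have {x_ge1} : 1 <= x by case: (1 <= x) x_ge1.
  rewrite /surcharge; nia.
- by exists 0%R, 0%R => x /=; rewrite addn0; case: (1 <= x).
Qed.

Definition ex_edge (u v : vertex) : option (nat -> nat) :=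
  match u, v with
  | Vs, Va => Some (cst 3)
  | Vs, Vb => Some (cst 0)
  | Vs, Vc => Some (surcharge 3)
  | Va, Vt => Some (cst 0)
  | Vb, Vb' => Some (cst 0)
  | Vb', Vm => Some (surcharge 1)
  | Vc, Vc' => Some (cst 0)
  | Vc, Vb' => Some (cst 1)
  | Vc', Vm => Some (cst 0)
  | Vm, Vt => Some (surcharge 2)
  | Vt, Vt => Some (cst 0)
  | _, _ => None
  end.

Definition ex_arena : arena := Arena ex_edge Vs Vt.

Definition dist_tgt (u : vertex) : nat :=
  match u with
  | Vs => 4 | Va => 1 | Vb => 3 | Vb' => 2 | Vc => 3 | Vc' => 2 | Vm => 1 | Vt => 0
  end.

Lemma dist_tgt_edge u v : is_edge ex_arena u v -> dist_tgt v <= (dist_tgt u).-1.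
Proof. by case: u; case: v. Qed.

Lemma dist_tgt0 u : dist_tgt u = 0 -> u = Vt.
Proof. by case: u. Qed.

Lemma wf_ex_arena : wf_arena ex_arena.
Proof.
split.
- by case; case => //= l [<-]; apply: cst_cost_fun || apply: surcharge_cost_fun.
- by case.
- by exists (cst 0).
- move=> v; apply/connectP.
  by case: v; [exists [:: Va; Vt] | exists [:: Vt] | exists [:: Vb'; Vm; Vt]
    | exists [:: Vm; Vt] | exists [:: Vc'; Vm; Vt] | exists [:: Vm; Vt] | exists [:: Vt]
    | exists [::]].
Qed.

Definition route_a := [:: Vs; Va; Vt; Vt; Vt].
Definition route_b := [:: Vs; Vb; Vb'; Vm; Vt].
Definition route_c := [:: Vs; Vc; Vc'; Vm; Vt].
Definition route_cb := [:: Vs; Vc; Vb'; Vm; Vt].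
Definition routes := [:: route_a; route_b; route_c; route_cb].

Lemma route_end p k : p \in routes -> 4 <= k -> nth Vt p k = Vt.
Proof.
by rewrite !inE => /or4P[]/eqP->; case: k => [|[|[|[|[|k]]]]] //= _; rewrite nth_nil.
Qed.

Lemma pos_route (sg : profile ex_arena 2) i : valid_profile sg ->
  exists2 p, p \in routes & forall k, pos sg k i = nth Vt p k.
Proof.
move=> valid_sg.
have at_tgt k : 4 <= k -> pos sg k i = Vt.
  move=> le4k; apply: dist_tgt0.
  have /= := rank_pos_le i valid_sg dist_tgt_edge k; lia.
have step k := valid_pos_edge k i valid_sg.
exists [:: Vs; pos sg 1 i; pos sg 2 i; pos sg 3 i; Vt].
  move: (step 0) (step 1) (step 2) (step 3); rewrite pos0 (at_tgt 4) //.
  by case: (pos sg 1 i) => //; case: (pos sg 2 i) => //; case: (pos sg 3 i).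
case=> [|[|[|[|k]]]] /=; rewrite ?pos0 // at_tgt //.
by case: k => [|k] /=; rewrite ?nth_nil.
Qed.

Definition route_cost (p q : seq vertex) : nat := @pair_cost ex_arena (nth Vt p) (nth Vt q) 4.

Lemma cost_route (sg : profile ex_arena 2) i j p q : i != j -> p \in routes ->
  (forall k, pos sg k i = nth Vt p k) -> (forall k, pos sg k j = nth Vt q k) ->
  cost sg i = Some (route_cost p q).
Proof.
move=> ne_ij p_route sg_p sg_q.
by apply: cost_pair wf_ex_arena ne_ij sg_p sg_q _ => k; apply: route_end.
Qed.

Definition follow (f u : vertex) : vertex :=
  match u with
  | Vs => f | Va => Vt | Vb => Vb' | Vb' => Vm | Vc => Vc' | Vc' => Vm | Vm => Vt | Vt => Vt
  end.

Lemma follow_edge f u : f \in [:: Va; Vb; Vc] -> is_edge ex_arena u (follow f u).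
Proof. by rewrite !inE => /or3P[]/eqP->; case: u. Qed.

Definition followed_routes := [:: (Va, route_a); (Vb, route_b); (Vc, route_c)].

Lemma iter_follow f p : (f, p) \in followed_routes ->
  forall k, iter k (follow f) Vs = nth Vt p k.
Proof.
rewrite !inE => fp k; have iter_Vt m : iter m (follow f) Vt = Vt by elim: m => //= m ->.
have p_route : p \in routes by move: fp => /or3P[]/eqP[_ ->].
case: (leqP 4 k) => [le4k | ltk4].
  have iter4 : iter 4 (follow f) Vs = Vt by move: fp => /or3P[]/eqP[-> _].
  by rewrite route_end // -(subnK le4k) iterD iter4 iter_Vt.
by move: fp => /or3P[]/eqP[-> ->]; case: k ltk4 => [|[|[|[|]]]].
Qed.

Definition shadow (own other : vertex) : vertex :=
  if (own == Vc) && (other == Vb) then Vb' else follow Vc own.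

Lemma shadow_edge u w : is_edge ex_arena u (shadow u w).
Proof. by case: u; case: w. Qed.

Definition reply q := if nth Vt q 1 == Vb then route_cb else route_c.

Lemma reply_route q : reply q \in routes.
Proof. by rewrite /reply; case: ifP. Qed.

Lemma shadow_reply q k : q \in routes ->
  shadow (nth Vt (reply q) k) (nth Vt q k) = nth Vt (reply q) k.+1.
Proof.
move=> q_route; case: (leqP 4 k) => [le4k | ltk4].
  by rewrite !route_end ?reply_route // (leqW le4k).
by move: q_route; rewrite !inE => /or4P[]/eqP->; case: k ltk4 => [|[|[|[|]]]].
Qed.

Lemma pos_shadow (sg : profile ex_arena 2) q :
  (forall h, sg ord0 h = shadow (cur h ord0) (cur h ord_max)) -> q \in routes ->
  (forall k, pos sg k ord_max = nth Vt q k) -> forall k, pos sg k ord0 = nth Vt (reply q) k.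
Proof.
move=> sg_shadow q_route sg_q; elim=> [|k IH]; first by rewrite pos0 /reply; case: ifP.
by rewrite pos_succ sg_shadow -/(pos sg k ord0) -/(pos sg k ord_max) IH sg_q shadow_reply.
Qed.

Definition shadow_profile : profile ex_arena 2 :=
  fun i h => if i == ord0 then shadow (cur h ord0) (cur h ord_max)
             else memoryless (A := ex_arena) (follow Va) i h.

Lemma shadow_profile_valid : valid_profile shadow_profile.
Proof.
move=> i h; rewrite /shadow_profile; case: ifP => [/eqP-> | _]; first exact: shadow_edge.
by apply: memoryless_valid => u; apply: follow_edge.
Qed.

Lemma shadow_profile_pos1 k : pos shadow_profile k ord_max = nth Vt route_a k.
Proof.
rewrite (pos_memoryless (f := follow Va : state ex_arena -> _)) => [|h].
  exact: iter_follow.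
by rewrite /shadow_profile memorylessE.
Qed.

Lemma shadow_profile_pos0 k : pos shadow_profile k ord0 = nth Vt route_c k.
Proof. exact: (pos_shadow (fun h => erefl) _ shadow_profile_pos1). Qed.

Lemma shadow_profile_cost :
  cost shadow_profile ord0 = Some 0 /\ cost shadow_profile ord_max = Some 3.
Proof.
rewrite (cost_route _ _ shadow_profile_pos0 shadow_profile_pos1) //.
rewrite (cost_route _ _ shadow_profile_pos1 shadow_profile_pos0) //.
by rewrite /route_cost /pair_cost !big_ord_recr !big_ord0.
Qed.

Lemma reply_deters q : q \in routes -> 3 <= route_cost q (reply q).
Proof. by rewrite /route_cost /pair_cost !big_ord_recr !big_ord0 !inE => /or4P[]/eqP->. Qed.

Lemma nash_shadow_profile : nash shadow_profile.
Proof.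
split=> [|i s valid_s]; first exact: shadow_profile_valid.
have [cost0 cost1] := shadow_profile_cost.
case: (ord2P i) => -> in valid_s *; first by rewrite cost0; case: cost.
have valid_dev := valid_upd shadow_profile_valid valid_s.
have [q q_route dev_q] := pos_route ord_max valid_dev.
have dev_reply := pos_shadow (fun h => erefl) q_route dev_q.
by rewrite cost1 (cost_route _ q_route dev_q dev_reply) //; apply: reply_deters.
Qed.

Lemma blind_nash_route_le (sg : profile ex_arena 2) i j p q f r :
  blind_nash sg -> i != j -> p \in routes ->
  (forall k, pos sg k i = nth Vt p k) -> (forall k, pos sg k j = nth Vt q k) ->
  (f, r) \in followed_routes -> route_cost p q <= route_cost r q.
Proof.
move=> [valid_sg blind_sg stable] ne_ij p_route sg_p sg_q fr.
have [b sg_b] := blind_sg j.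
have r_route : r \in routes by move: fr; rewrite !inE => /or3P[]/eqP[_ ->].
have valid_succ := memoryless_valid i (fun u => follow_edge u (map_f fst fr)).
have := stable i _ valid_succ; rewrite -/(memoryless _ i).
set dev := upd sg i _.
have dev_r k : pos dev k i = nth Vt r k.
  rewrite (pos_memoryless (f := follow f : state ex_arena -> _)) => [|h].
    exact: iter_follow.
  by rewrite /dev /upd eqxx memorylessE.
have dev_q k : pos dev k j = nth Vt q k.
  have dev_j : dev j = sg j by rewrite /dev /upd eq_sym (negbTE ne_ij).
  by rewrite -sg_q; apply: (pos_blind (b := b)) => h; rewrite ?dev_j sg_b.
by rewrite (cost_route ne_ij p_route sg_p sg_q) (cost_route ne_ij r_route dev_r dev_q).
Qed.

Lemma stable_route_pair_cost p q : p \in routes -> q \in routes ->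
  route_cost p q <= route_cost route_b q -> route_cost p q <= route_cost route_c q ->
  route_cost q p <= route_cost route_b p -> route_cost q p <= route_cost route_c p ->
  3 < route_cost p q + route_cost q p.
Proof.
rewrite /route_cost /pair_cost !big_ord_recr !big_ord0 !inE.
by move=> /or4P[]/eqP-> /or4P[]/eqP->.
Qed.

Lemma blind_nash_social_cost (sg : profile ex_arena 2) :
  blind_nash sg -> exists2 c, social_cost sg = Some c & 3 < c.
Proof.
move=> nash_sg; have [valid_sg _ _] := nash_sg.
have [p p_route sg_p] := pos_route ord0 valid_sg.
have [q q_route sg_q] := pos_route ord_max valid_sg.
have ne01 : ord0 != ord_max :> 'I_2 by [].
have ne10 : ord_max != ord0 :> 'I_2 by [].
have stable0 := blind_nash_route_le nash_sg ne01 p_route sg_p sg_q.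
have stable1 := blind_nash_route_le nash_sg ne10 q_route sg_q sg_p.
exists (route_cost p q + route_cost q p).
  by rewrite social_cost_two (cost_route _ p_route sg_p sg_q) // (cost_route _ q_route sg_q sg_p).
by apply: stable_route_pair_cost => //;
  [apply: (stable0 Vb) | apply: (stable0 Vc) | apply: (stable1 Vb) | apply: (stable1 Vc)].
Qed.

Theorem mainTheorem4 :
  exists (A : arena) (n : nat) (pi : profile A n),
    wf_arena A /\ nash pi /\
    forall pi' : profile A n, blind_nash pi' -> elt (social_cost pi) (social_cost pi').
Proof.
exists ex_arena, 2, shadow_profile; split; first exact: wf_ex_arena.
split=> [|sg /blind_nash_social_cost [c -> gt3c]]; first exact: nash_shadow_profile.
have [cost0 cost1] := shadow_profile_cost.
by rewrite social_cost_two cost0 cost1 /elt /= -ltnNge.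
Qed.
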